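(* For every formula $\varphi$ of $\mathcal L^{\bigcirc}_\square$ the following are equivalent: (i) $\varphi$ is derivable in $\mathbf{wK4H}$; (ii) $\varphi$ is valid on every finite invertible dynamic $\mathbf{wK4}$ frame; (iii) $\varphi$ is valid, with respect to the $d$-semantics, on every invertible dynamic topological system $\langle X,\tau,f\rangle$ with $X$ finite.
   Context: Language $\mathcal L^{\bigcirc}_\square$: $\varphi::= p\mid \varphi\wedge\varphi\mid\neg\varphi\mid\square\varphi\mid\bigcirc\varphi$, $p$ ranging over a fixed non-empty set $\mathsf{PV}$. Axioms and rules: Taut; K: $\square(\varphi\to\psi)\to(\square\varphi\to\square\psi)$; w4: $\varphi\wedge\square\varphi\to\square\square\varphi$; ${\rm Next}_\neg$: $\neg\bigcirc\varphi\leftrightarrow\bigcirc\neg\varphi$; ${\rm Next}_\wedge$: $\bigcirc(\varphi\wedge\psi)\leftrightarrow\bigcirc\varphi\wedge\bigcirc\psi$; H: $\square\bigcirc\varphi\leftrightarrow\bigcirc\square\varphi$; rules modus ponens, ${\rm Nec}_\square$, ${\rm Nec}_\bigcirc$. $\mathbf{wK4H}$ is axiomatised by Taut, K, w4, ${\rm Next}_\neg$, ${\rm Next}_\wedge$, H, closed under these rules. An invertible dynamic $\mathbf{wK4}$ frame is $\langle W,\sqsubset,f\rangle$ with $W$ non-empty, $\sqsubset$ weakly transitive ($w\sqsubset v\sqsubset u$ and $w\ne u$ imply $w\sqsubset u$), and $f\colon W\to W$ a bijection such that $w\sqsubset v$ iff $f(w)\sqsubset f(v)$. Kripke truth: $w\models\square\varphi$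 iff $v\models\varphi$ for all $v$ with $w\sqsubset v$; $w\models\bigcirc\varphi$ iff $f(w)\models\varphi$; Boolean clauses standard. An invertible DTS is $\langle X,\tau,f\rangle$ with $f\colon X\to X$ a homeomorphism. $d$-semantics: with $d(A)$ the set of $x$ in the closure of $A\setminus\{x\}$, $\|p\|=\nu(p)$, Boolean clauses set-theoretic, $\|\square\varphi\|=X\setminus d(\|\neg\varphi\|)$, $\|\bigcirc\varphi\|=f^{-1}(\|\varphi\|)$. Validity means truth everywhere under every valuation. *)

From mathcomp Require Import all_boot.
Set Implicit Arguments. Unset Strict Implicit. Unset Printing Implicit Defensive.

Inductive form (PV : Type) : Type :=
| Var : PV -> form PV
| And : form PV -> form PV -> form PV
| Neg : form PV -> form PV
| Box : form PV -> form PV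
| Next : form PV -> form PV.
Arguments Var {PV}. Arguments And {PV}. Arguments Neg {PV}.
Arguments Box {PV}. Arguments Next {PV}.

Definition Imp {PV} (a b : form PV) : form PV := Neg (And a (Neg b)).
Definition Iff {PV} (a b : form PV) : form PV := And (Imp a b) (Imp b a).

(* Propositional tautologies: true under every Boolean valuation in which
   variables, []-formulas and ()-formulas are treated as atoms. *)
Fixpoint peval {PV} (v : form PV -> Prop) (a : form PV) : Prop :=
  match a with
  | Var _ => v a
  | And b c => peval v b /\ peval v c
  | Neg b => ~ peval v b
  | Box _ => v a
  | Next _ => v a
  end.
Definition Taut {PV} (a : form PV) : Prop := forall v, peval v a.

Inductive wK4H {PV : Type} : form PV -> Prop :=
| ax_taut a : Taut a -> wK4H a
| ax_K a b : wK4H (Imp (Box (Imp a b)) (Imp (Box a) (Box b)))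
| ax_w4 a : wK4H (Imp (And a (Box a)) (Box (Box a)))
| ax_next_neg a : wK4H (Iff (Neg (Next a)) (Next (Neg a)))
| ax_next_and a b : wK4H (Iff (Next (And a b)) (And (Next a) (Next b)))
| ax_H a : wK4H (Iff (Box (Next a)) (Next (Box a)))
| r_mp a b : wK4H (Imp a b) -> wK4H a -> wK4H b
| r_nec_box a : wK4H a -> wK4H (Box a)
| r_nec_next a : wK4H a -> wK4H (Next a).

Definition weakly_transitive {W : Type} (R : W -> W -> Prop) : Prop :=
  forall w v u, R w v -> R v u -> w <> u -> R w u.

Definition inv_dyn_wK4_frame {W : Type} (R : W -> W -> Prop) (f : W -> W) : Prop :=
  inhabited W /\ weakly_transitive R /\ bijective f /\
  (forall w v, R w v <-> R (f w) (f v)).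

Fixpoint ksat {PV W : Type} (R : W -> W -> Prop) (f : W -> W)
    (val : PV -> W -> Prop) (a : form PV) (w : W) : Prop :=
  match a with
  | Var p => val p w
  | And b c => ksat R f val b w /\ ksat R f val c w
  | Neg b => ~ ksat R f val b w
  | Box b => forall v, R w v -> ksat R f val b v
  | Next b => ksat R f val b (f w)
  end.

Definition frame_valid {PV W : Type} (R : W -> W -> Prop) (f : W -> W)
    (a : form PV) : Prop :=
  forall (val : PV -> W -> Prop) (w : W), ksat R f val a w.

Definition is_topology {X : Type} (opens : (X -> Prop) -> Prop) : Prop :=
  opens (fun _ => False) /\ opens (fun _ => True) /\
  (forall U V, opens U -> opens V -> opens (fun x => U x /\ V x)) /\
  (forall F : (X -> Prop) -> Prop, (forall U, F U -> opens U) ->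
     opens (fun x => exists U, F U /\ U x)).

Definition continuous_top {X : Type} (opens : (X -> Prop) -> Prop) (f : X -> X) : Prop :=
  forall U, opens U -> opens (fun x => U (f x)).

Definition homeomorphism {X : Type} (opens : (X -> Prop) -> Prop) (f : X -> X) : Prop :=
  exists g : X -> X, cancel f g /\ cancel g f /\
    continuous_top opens f /\ continuous_top opens g.

Definition closure {X : Type} (opens : (X -> Prop) -> Prop) (A : X -> Prop) (x : X) : Prop :=
  forall U, opens U -> U x -> exists y, U y /\ A y.

Definition dset {X : Type} (opens : (X -> Prop) -> Prop) (A : X -> Prop) (x : X) : Prop :=
  closure opens (fun y => A y /\ y <> x) x.

Fixpoint dden {PV X : Type} (opens : (X -> Prop) -> Prop) (f : X -> X)
    (nu : PV -> X -> Prop) (a : form PV) : X -> Prop :=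
  match a with
  | Var p => nu p
  | And b c => fun x => dden opens f nu b x /\ dden opens f nu c x
  | Neg b => fun x => ~ dden opens f nu b x
  | Box b => fun x => ~ dset opens (fun y => ~ dden opens f nu b y) x
  | Next b => fun x => dden opens f nu b (f x)
  end.

Definition dts_valid {PV X : Type} (opens : (X -> Prop) -> Prop) (f : X -> X)
    (a : form PV) : Prop :=
  forall (nu : PV -> X -> Prop) (x : X), dden opens f nu a x.

From mathcomp Require Import all_boot.
From mathcomp Require Import boolp classical_sets.
From Stdlib Require Import Classical.
From Stdlib Require Lists.List.
Set Implicit Arguments. Unset Strict Implicit. Unset Printing Implicit Defensive.

(* (i) => (ii) is soundness, proved for arbitrary frames.
   (ii) <=> (iii) compares finite frames and finite spaces directly: a finite
   space yields the frame of its strict specialisation order, whose Kripke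
   semantics is its d-semantics; a finite frame yields the "twin" Alexandroff
   space in which every reflexive point is doubled, so that it becomes a limit
   point of its least neighbourhood.
   (ii) => (i) is by contraposition.  The Next axioms let every formula be
   rewritten as the expansion of a Next-free formula psi over atoms (k, p),
   read as Next^k p.  If phi is not derivable, psi is refuted in the canonical
   model of wK4H (weakly transitive thanks to w4), hence, by a filtration
   through the subformulas of psi, in a finite weakly transitive frame F.
   Finally, a cycle of copies of F, indexed by layers 0..B with B the Next
   depth of phi and the dynamics moving up one layer, is a finite invertible
   dynamic wK4 frame refuting phi. *)

Section KripkeSoundness.
Variables (PV W : Type) (R : W -> W -> Prop) (f : W -> W) (val : PV -> W -> Prop).

Local Notation sat := (ksat R f val).

Lemma ksat_Imp a b w : sat (Imp a b) w <-> (sat a w -> sat b w).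
Proof.
rewrite /=; split=> [H Ha|H [Ha Hb]]; last exact/Hb/H.
by apply: NNPP => Hb; apply: H.
Qed.

Lemma ksat_Iff a b w : sat (Iff a b) w <-> (sat a w <-> sat b w).
Proof. by have := ksat_Imp a b w; have := ksat_Imp b a w; rewrite /=; tauto. Qed.

(* A world is a Boolean valuation of the modal atoms, so tautologies hold. *)
Lemma peval_ksat a w : peval (sat^~ w) a <-> sat a w.
Proof. by elim: a => //= [a IHa b IHb|a IHa]; rewrite ?IHa ?IHb. Qed.

Hypothesis R_wtrans : weakly_transitive R.
Hypothesis f_bij : bijective f.
Hypothesis f_iso : forall w v, R w v <-> R (f w) (f v).

Lemma soundness a : wK4H a -> forall w, sat a w.
Proof.
elim=> {a} [a Ta w|a b w|a w|a w|a b w|a w|a b _ Hab _ Ha w|a _ Ha w v _|a _ Ha w].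
- exact/peval_ksat/Ta.
- rewrite !ksat_Imp => Hab Ha v Rwv.
  have Habv : sat (Imp a b) v := Hab v Rwv.
  by move: Habv; rewrite ksat_Imp; apply; apply: Ha.
- rewrite ksat_Imp => -[Ha Hba] v Rwv u Rvu.
  have [<-|neq] := classic (w = u); first exact: Ha.
  exact/Hba/(R_wtrans Rwv Rvu neq).
- by rewrite ksat_Iff.
- by rewrite ksat_Iff.
- rewrite ksat_Iff /=; case: f_bij => g fK gK; split=> [H u Ru|H v Rv].
    by rewrite -(gK u); apply: H; rewrite f_iso gK.
  by apply: H; rewrite -f_iso.
- by move: (Hab w); rewrite ksat_Imp; apply.
- exact: Ha.
- exact: Ha.
Qed.
End KripkeSoundness.

Lemma frame_valid_of_wK4H (PV W : Type) (R : W -> W -> Prop) (f : W -> W) (a : form PV) :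
  wK4H a -> inv_dyn_wK4_frame R f -> frame_valid R f a.
Proof. by move=> Ha [_ [wt [fb fR]]] val; apply: soundness. Qed.

Section SpaceToFrame.
Variables (PV : Type) (X : finType) (opens : (X -> Prop) -> Prop) (f : X -> X).
Hypothesis X_top : is_topology opens.
Hypothesis f_homeo : homeomorphism opens f.

(* The strict specialisation order: y is a point other than x lying in every
   neighbourhood of x.  On a finite space it makes d-semantics Kripkean. *)
Definition spec_rel (x y : X) : Prop := y <> x /\ forall U, opens U -> U x -> U y.

Lemma least_nbhd x :
  exists U, opens U /\ U x /\ forall y, U y -> forall V, opens V -> V x -> V y.
Proof.
case: X_top => _ [opT [opI _]].
suff /(_ (enum X)) [U [oU [Ux HU]]] : forall s : seq X, exists U, opens U /\ U x /\
    forall y, y \in s -> U y -> forall V, opens V -> V x -> V y.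
  by exists U; do 2!split=> //; move=> y; apply: HU; rewrite mem_enum.
elim=> [|y s [U [oU [Ux HU]]]]; first by exists (fun _ => True).
have [Hy|/not_all_ex_not [V nV]] := classic (forall V, opens V -> V x -> V y).
  exists U; do 2!split=> //; move=> z; rewrite inE => /orP[/eqP->|]//.
  exact: HU.
have [oV [Vx nVy]] : opens V /\ V x /\ ~ V y by tauto.
exists (fun z => U z /\ V z); split; first exact: opI.
by split=> // z; rewrite inE => /orP[/eqP->|zs] [Uz Vz] //; apply: HU.
Qed.

(* A homeomorphism is an automorphism of the specialisation order. *)
Lemma spec_frame : inhabited X -> inv_dyn_wK4_frame spec_rel f.
Proof.
move=> inhX; case: f_homeo => g [fK [gK [f_cont g_cont]]].
have f_inj : injective f by apply: can_inj fK.
split=> //; split.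
  move=> x y z [nyx Hxy] [nzy Hyz] nxz; split=> [ezx|U oU Ux]; first by apply: nxz; rewrite ezx.
  exact: Hyz U oU (Hxy U oU Ux).
split; first by exists g.
move=> x y; split=> -[nyx Hxy].
  split=> [/f_inj //|V oV Vfx]; last exact: (Hxy (fun z => V (f z)) (f_cont V oV)).
split=> [exy|V oV Vx]; first by apply: nyx; rewrite exy.
by have := Hxy (fun z => V (g z)) (g_cont V oV); rewrite !fK; apply.
Qed.

Lemma spec_truth (nu : PV -> X -> Prop) (a : form PV) x :
  ksat spec_rel f nu a x <-> dden opens f nu a x.
Proof.
elim: a x => [p|a IHa b IHb|a IHa|a IHa|a IHa] x /=; rewrite ?IHa ?IHb //.
split=> [H dx|ndx y [nyx Hxy]].
  have [U [oU [Ux HU]]] := least_nbhd x.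
  have [y [Uy [ny nyx]]] := dx U oU Ux.
  by apply: ny; rewrite -IHa; apply: H; split=> //; apply: HU.
apply: NNPP => ny; apply: ndx => U oU Ux.
by exists y; split; [apply: Hxy|rewrite -IHa].
Qed.
End SpaceToFrame.

Lemma dts_valid_of_frame_valid (PV : Type) (phi : form PV) :
  (forall (W : finType) (R : W -> W -> Prop) (f : W -> W),
      inv_dyn_wK4_frame R f -> frame_valid R f phi) ->
  (forall (X : finType) (opens : (X -> Prop) -> Prop) (f : X -> X),
      is_topology opens -> homeomorphism opens f -> dts_valid opens f phi).
Proof.
move=> Hphi X opens f X_top f_homeo nu x.
rewrite -(@spec_truth PV X opens f X_top); apply: Hphi.
exact: spec_frame f_homeo (inhabits x).
Qed.

Section FrameToSpace.
Variables (PV : Type) (W : finType) (R : W -> W -> Prop) (f : W -> W).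
Hypothesis W_frame : inv_dyn_wK4_frame R f.

(* The good points are the
   copies (w, false), representing W, and, for reflexive w, a twin (w, true)
   making w a limit point of its own neighbourhood; (w, true) for an
   irreflexive w is an isolated dummy point. *)
Definition twin_good (x : W * bool) : Prop := x.2 = false \/ R x.1 x.1.

(* The specialisation preorder of the twin space; its up-sets are the opens. *)
Definition twin_le (x y : W * bool) : Prop :=
  x = y \/ (R x.1 y.1 /\ twin_good x /\ twin_good y).
Definition twin_open (U : W * bool -> Prop) : Prop :=
  forall x y, U x -> twin_le x y -> U y.
Definition twin_map (x : W * bool) : W * bool := (f x.1, x.2).

(* Weak transitivity of R makes twin_le transitive. *)
Lemma twin_le_trans x y z : twin_le x y -> twin_le y z -> twin_le x z.
Proof.
case: W_frame => _ [wt _].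
move=> [<-//|[Rxy [ox oy]]] [<-|[Ryz [_ oz]]]; first by right.
have [->|nxz] := classic (x = z); first by left.
right; split=> //; have [e1|ne1] := classic (x.1 = z.1); last exact: wt Rxy Ryz ne1.
case: x z nxz e1 ox oz {Rxy Ryz oy} => [w b] [v c] /= nxz evw.
rewrite /twin_good /= -evw => -[eb|//] [ec|//].
by exfalso; apply: nxz; rewrite eb ec evw.
Qed.

(* The up-sets of any relation form a topology. *)
Lemma twin_topology : is_topology twin_open.
Proof.
do 3!split=> //.
  by move=> U V oU oV x y [Ux Vx] l; split; [apply: oU l|apply: oV l].
by move=> F HF x y [U [FU Ux]] l; exists U; split=> //; apply: HF FU _ _ Ux l.
Qed.

Lemma twin_le_map (h : W -> W) (hR : forall w v, R w v -> R (h w) (h v)) x y :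
  twin_le x y -> twin_le (h x.1, x.2) (h y.1, y.2).
Proof.
move=> [->|[Rxy [ox oy]]]; [left|right] => //.
by rewrite /twin_good /=; split; [|split]; [apply: hR|case: ox; auto|case: oy; auto].
Qed.

Lemma twin_homeomorphism : homeomorphism twin_open twin_map.
Proof.
case: W_frame => _ [_ [[g fK gK] fR]].
have gR w v : R w v -> R (g w) (g v) by rewrite [R (g w) _]fR !gK.
have fR' w v : R w v -> R (f w) (f v) by move/fR.
exists (fun x => (g x.1, x.2)); split; first by case=> w b; rewrite /twin_map fK.
split; first by case=> w b; rewrite /twin_map gK.
by split=> U oU x y Ux l; apply: oU Ux _; apply: twin_le_map.
Qed.

Lemma twin_successor x v : twin_good x -> R x.1 v ->
  exists y, y.1 = v /\ twin_le x y /\ twin_good y /\ y <> x.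
Proof.
move=> ox Rxv; have [evx|nvx] := classic (v = x.1).
  have oy : twin_good (x.1, ~~ x.2) by right; rewrite -{2}evx.
  exists (x.1, ~~ x.2); do !split=> //; first by right; rewrite -{2}evx.
  by move=> /(f_equal snd) /=; case: (x.2).
exists (v, false); do !split=> //; first by right; do !split=> //; left.
  by left.
by move=> evx; apply: nvx; rewrite -evx.
Qed.

Lemma twin_truth (val : PV -> W -> Prop) (a : form PV) x : twin_good x ->
  dden twin_open twin_map (fun p y => val p y.1) a x <-> ksat R f val a x.1.
Proof.
elim: a x => [p|a IHa b IHb|a IHa|a IHa|a IHa] x ox /=.
- by [].
- by rewrite IHa // IHb.
- by rewrite IHa.
- split=> [ndx v Rxv|H dx].
    apply: NNPP => nv; apply: ndx => U oU Ux.
    have [y [ey [lxy [oy nyx]]]] := twin_successor ox Rxv.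
    by exists y; split; [apply: oU lxy|rewrite IHa // ey].
  have twin_le_open : twin_open (twin_le x) by move=> y z; apply: twin_le_trans.
  have [y [lxy [ny nyx]]] := dx _ twin_le_open (or_introl erefl).
  case: lxy => [exy|[Rxy [_ oy]]]; first by apply: nyx.
  by apply: ny; rewrite IHa //; apply: H.
- rewrite IHa //; case: W_frame => _ [_ [_ fR]].
  by case: ox => [h|h]; [left|right; rewrite /= -fR].
Qed.
End FrameToSpace.

Lemma frame_valid_of_dts_valid (PV : Type) (phi : form PV) :
  (forall (X : finType) (opens : (X -> Prop) -> Prop) (f : X -> X),
      is_topology opens -> homeomorphism opens f -> dts_valid opens f phi) ->
  (forall (W : finType) (R : W -> W -> Prop) (f : W -> W),
      inv_dyn_wK4_frame R f -> frame_valid R f phi).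
Proof.
move=> Hphi W R f W_frame val w.
have := Hphi _ _ _ (twin_topology R) (twin_homeomorphism W_frame)
  (fun p y => val p y.1) (w, false).
by rewrite (twin_truth W_frame) //; left.
Qed.

Lemma Forall_filter_asbool (T : Type) (P : T -> Prop) (l : seq T) :
  List.Forall P (filter (fun b => `[< P b >]) l).
Proof. by elim: l => //= a l IH; case: asboolP => //= h; constructor. Qed.

Lemma peval_imp (PV : Type) (v : form PV -> Prop) (a b : form PV) :
  peval v (Imp a b) <-> (peval v a -> peval v b).
Proof. rewrite /=; split=> [H ha|H [/H]] //; by apply: NNPP => hb; apply: H. Qed.

(* Decides the propositional tautologies arising below by case analysis on
   the truth values of all atoms and subformulas. *)
Ltac ptaut := let v := fresh "v" in intro v; rewrite ?peval_imp /=;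
  repeat match goal with
  | |- context [peval v ?x] => lazymatch goal with
      | H : peval v x |- _ => fail | H : ~ peval v x |- _ => fail
      | _ => destruct (classic (peval v x)) end
  | |- context [v ?x] => lazymatch goal with
      | H : v x |- _ => fail | H : ~ v x |- _ => fail
      | _ => destruct (classic (v x)) end
  end; tauto.

Section Derivability.
Variables (PV : Type) (p0 : PV).
Local Notation form := (form PV).
Local Notation der := (@wK4H PV).

(* Disjunction and finite conjunction; the empty conjunction needs some
   formula, hence the variable p0. *)
Definition top : form := Neg (And (Var p0) (Neg (Var p0))).
Definition Or (a b : form) : form := Neg (And (Neg a) (Neg b)).
Definition conj (l : seq form) : form := foldr And top l.

Lemma peval_conj v l : peval v (conj l) <-> List.Forall (peval v) l.
Proof.
elim: l => [|a l IH] /=; first by split=> // _; case.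
by rewrite List.Forall_cons_iff IH.
Qed.

Lemma taut_mp a b : Taut (Imp a b) -> der a -> der b.
Proof. by move=> T Ha; apply: r_mp Ha; apply: ax_taut. Qed.
Lemma taut_mp2 a b c : Taut (Imp a (Imp b c)) -> der a -> der b -> der c.
Proof. by move=> T Ha Hb; apply: r_mp (taut_mp T Ha) Hb. Qed.
Lemma taut_mp3 a b c d :
  Taut (Imp a (Imp b (Imp c d))) -> der a -> der b -> der c -> der d.
Proof. by move=> T Ha Hb Hc; apply: r_mp (taut_mp2 T Ha Hb) Hc. Qed.

Lemma iff_refl a : der (Iff a a).
Proof. by apply: ax_taut; ptaut. Qed.
Lemma iff_sym a b : der (Iff a b) -> der (Iff b a).
Proof. by move=> H; apply: (taut_mp _ H); ptaut. Qed.
Lemma iff_trans a b c : der (Iff a b) -> der (Iff b c) -> der (Iff a c).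
Proof. by move=> H1 H2; apply: (taut_mp2 _ H1 H2); ptaut. Qed.
Lemma iff_imp a b : der (Iff a b) -> der (Imp a b).
Proof. by move=> H; apply: (taut_mp _ H); ptaut. Qed.
Lemma imp_iff a b : der (Imp a b) -> der (Imp b a) -> der (Iff a b).
Proof. by move=> H1 H2; apply: (taut_mp2 _ H1 H2); ptaut. Qed.
Lemma imp_trans a b c : der (Imp a b) -> der (Imp b c) -> der (Imp a c).
Proof. by move=> H1 H2; apply: (taut_mp2 _ H1 H2); ptaut. Qed.
Lemma iff_and a a' b b' :
  der (Iff a a') -> der (Iff b b') -> der (Iff (And a b) (And a' b')).
Proof. by move=> H1 H2; apply: (taut_mp2 _ H1 H2); ptaut. Qed.
Lemma iff_neg a a' : der (Iff a a') -> der (Iff (Neg a) (Neg a')).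
Proof. by move=> H; apply: (taut_mp _ H); ptaut. Qed.

Lemma box_mono a b : der (Imp a b) -> der (Imp (Box a) (Box b)).
Proof. by move=> H; apply: r_mp (ax_K a b) (r_nec_box H). Qed.

Lemma iff_box a b : der (Iff a b) -> der (Iff (Box a) (Box b)).
Proof. by move=> H; apply: imp_iff; apply: box_mono; apply: iff_imp; last apply: iff_sym. Qed.

Lemma next_mono a b : der (Imp a b) -> der (Imp (Next a) (Next b)).
Proof.
move=> H; have H1 := r_nec_next H.
have H2 := ax_next_neg (And a (Neg b)); have H3 := ax_next_and a (Neg b).
have H4 := ax_next_neg b.
by apply: (r_mp _ H4); apply: (taut_mp3 _ H1 H2 H3); ptaut.
Qed.

Lemma iff_next a b : der (Iff a b) -> der (Iff (Next a) (Next b)).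
Proof. by move=> H; apply: imp_iff; apply: next_mono; apply: iff_imp; last apply: iff_sym. Qed.

Lemma box_and a b : der (Imp (And (Box a) (Box b)) (Box (And a b))).
Proof.
have h1 : der (Box (Imp a (Imp b (And a b)))) by apply/r_nec_box/ax_taut; ptaut.
have h2 := ax_K a (Imp b (And a b)); have h3 := ax_K b (And a b).
by apply: (taut_mp3 _ h1 h2 h3); ptaut.
Qed.

Lemma box_conj l : der (Imp (conj (map Box l)) (Box (conj l))).
Proof.
elim: l => [|a l IH] /=.
  have h : der (Box top) by apply/r_nec_box/ax_taut; ptaut.
  by apply: (taut_mp _ h); ptaut.
by apply: (taut_mp2 _ IH (box_and a (conj l))); ptaut.
Qed.

Definition consistent (G : form -> Prop) : Prop :=
  forall l, List.Forall G l -> ~ der (Neg (conj l)).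
Definition maxcons (G : form -> Prop) : Prop :=
  consistent G /\ forall a, consistent (fun b => G b \/ b = a) -> G a.

Lemma consistent_sub (G G' : form -> Prop) :
  (forall b, G' b -> G b) -> consistent G -> consistent G'.
Proof. by move=> H cG l hl; apply: cG; apply: List.Forall_impl hl. Qed.

Lemma conj_filter_split (G : form -> Prop) a l v :
  List.Forall (fun b => G b \/ b = a) l ->
  peval v (conj (filter (fun b => `[< G b >]) l)) -> peval v a -> peval v (conj l).
Proof.
rewrite !peval_conj => Hl + va; elim: Hl => //= b {}l Hb _ IH.
case: asboolP => /= [Gb /List.Forall_cons_iff [pb /IH]|nGb /IH]; constructor=> //.
by case: Hb => [//|->].
Qed.

Section MaximalConsistent.
Variable G : form -> Prop.
Hypothesis G_max : maxcons G.

Lemma maxcons_closed l b : List.Forall G l -> der (Imp (conj l) b) -> G b.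
Proof.
move=> hl hd; apply: G_max.2 => l2 hl2 hn.
set l2' := filter (fun c => `[< G c >]) l2.
apply: (G_max.1 (l ++ l2')).
  by apply/List.Forall_app; split=> //; apply: Forall_filter_asbool.
apply: (taut_mp2 _ hd hn) => v; rewrite !peval_imp /= => h1 h2 h3.
move: h3; rewrite peval_conj List.Forall_app -!peval_conj => -[c1 c2]; apply: h2.
exact: conj_filter_split hl2 c2 (h1 c1).
Qed.

Lemma maxcons_der b : der b -> G b.
Proof. by move=> h; apply: (@maxcons_closed [::]) => //; apply: (taut_mp _ h); ptaut. Qed.

Lemma maxcons_neg a : G (Neg a) <-> ~ G a.
Proof.
split=> [hn ha|na].
  by apply: (G_max.1 [:: a; Neg a]); [repeat constructor|apply: ax_taut; ptaut].
apply: G_max.2 => l hl hn; apply: na.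
apply: (@maxcons_closed (filter (fun c => `[< G c >]) l)); first exact: Forall_filter_asbool.
apply: (taut_mp _ hn) => v; rewrite !peval_imp /= => h1 h2; apply: NNPP => h3; apply: h1.
exact: conj_filter_split hl h2 h3.
Qed.

Lemma maxcons_and a b : G (And a b) <-> G a /\ G b.
Proof.
split=> [h|[ha hb]].
  by split; (apply: (@maxcons_closed [:: And a b]); [repeat constructor|apply: ax_taut; ptaut]).
by apply: (@maxcons_closed [:: a; b]); [repeat constructor|apply: ax_taut; ptaut].
Qed.

Lemma maxcons_mp a b : G (Imp a b) -> G a -> G b.
Proof.
move=> h1 h2.
by apply: (@maxcons_closed [:: Imp a b; a]); [repeat constructor|apply: ax_taut; ptaut].
Qed.
End MaximalConsistent.

Local Open Scope classical_set_scope.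

(* Consistency has finite character: the union of a chain of consistent
   extensions of S is again a consistent extension of S. *)
Lemma consistent_chain_union (S : form -> Prop) (F : set (set form)) :
  consistent S -> (forall A, F A -> consistent (fun b => S b \/ A b)) ->
  total_on F subset -> consistent (fun b => S b \/ (\bigcup_(A in F) A) b).
Proof.
move=> cS FP Ftot l hl.
suff [A [FA hA]] : exists A, (F A \/ A = set0) /\ List.Forall (fun b => S b \/ A b) l.
  case: FA => [FA|eA]; first exact: FP _ FA l hA.
  by apply: (consistent_sub _ cS) hA => b [//|]; rewrite eA.
elim: hl => [|b {}l hb _ [A [FA hA]]]; first by exists set0; split; [right|].
case: hb => [Sb|[B FB Bb]]; first by exists A; split=> //; constructor=> //; left.
have sub_hyps (C : set form) : A `<=` C -> List.Forall (fun c => S c \/ C c) l.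
  by move=> AC; apply: List.Forall_impl hA => c [|/AC]; [left|right].
case: FA => [FA|eA].
  case: (Ftot A B FA FB) => [AB|BA]; [exists B|exists A]; split; try by left.
  - by constructor; [right|apply: sub_hyps].
  - by constructor=> //; right; apply: BA.
by exists B; split; [left|constructor; [right|apply: sub_hyps; rewrite eA]].
Qed.

Lemma lindenbaum (S : form -> Prop) :
  consistent S -> exists G, maxcons G /\ forall a, S a -> G a.
Proof.
move=> cS.
have [A [cSA maxA]] := Zorn_bigcup (fun F FP Ftot => consistent_chain_union cS FP Ftot).
exists (fun b => S b \/ A b); split; last by move=> a; left.
split=> // a ca; apply: NNPP => na.
apply: (maxA (fun b => A b \/ b = a)).
  by split=> [b|h]; [left|apply: na; right; apply: h; right].
by apply: (consistent_sub _ ca) => b [|[|]]; [left; left|left; right|right].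
Qed.
End Derivability.

(* Formulas over the alphabet nat * PV, in which the atom (k, p) stands for
   Next^k p; [expand] reads them back into the original language. *)
Fixpoint expand {PV : Type} (a : form (nat * PV)) : form PV :=
  match a with
  | Var kp => iter kp.1 Next (Var kp.2)
  | And b c => And (expand b) (expand c)
  | Neg b => Neg (expand b)
  | Box b => Box (expand b)
  | Next b => Next (expand b)
  end.

Fixpoint next_free {A : Type} (a : form A) : Prop :=
  match a with
  | Var _ => True
  | And b c => next_free b /\ next_free c
  | Neg b | Box b => next_free b
  | Next _ => False
  end.

Fixpoint var_bound {PV : Type} (B : nat) (a : form (nat * PV)) : Prop :=
  match a with
  | Var kp => kp.1 <= B
  | And b c => var_bound B b /\ var_bound B c
  | Neg b | Box b | Next b => var_bound B b
  end.

(* The Next-normal form of Next^k a: Next is pushed down to the atoms. *)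
Fixpoint next_nf {PV : Type} (a : form PV) (k : nat) : form (nat * PV) :=
  match a with
  | Var p => Var (k, p)
  | And b c => And (next_nf b k) (next_nf c k)
  | Neg b => Neg (next_nf b k)
  | Box b => Box (next_nf b k)
  | Next b => next_nf b k.+1
  end.

Fixpoint next_depth {PV : Type} (a : form PV) : nat :=
  match a with
  | Var _ => 0
  | And b c => maxn (next_depth b) (next_depth c)
  | Neg b | Box b => next_depth b
  | Next b => (next_depth b).+1
  end.

Lemma next_nf_free (PV : Type) (a : form PV) k : next_free (next_nf a k).
Proof. by elim: a k => //= b IHb c IHc k; split. Qed.

Lemma var_bound_mono (PV : Type) (B B' : nat) (a : form (nat * PV)) :
  B <= B' -> var_bound B a -> var_bound B' a.
Proof.
move=> leBB'; elim: a => //= [kp|b IHb c IHc]; first by move/leq_trans; apply.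
by case=> ??; split; [apply: IHb|apply: IHc].
Qed.

Lemma next_nf_bound (PV : Type) (a : form PV) k :
  var_bound (k + next_depth a) (next_nf a k).
Proof.
elim: a k => //= [p|b IHb c IHc|b IHb] k; first by rewrite addn0.
  by split; [apply: var_bound_mono (IHb k)|apply: var_bound_mono (IHc k)];
    rewrite leq_add2l ?leq_maxl ?leq_maxr.
by rewrite addnS -addSn.
Qed.

Lemma iter_next_and (PV : Type) k (a b : form PV) :
  wK4H (Iff (iter k Next (And a b)) (And (iter k Next a) (iter k Next b))).
Proof.
elim: k => [|k IH] /=; first exact: iff_refl.
exact: iff_trans (iff_next IH) (ax_next_and _ _).
Qed.

Lemma iter_next_neg (PV : Type) k (a : form PV) :
  wK4H (Iff (iter k Next (Neg a)) (Neg (iter k Next a))).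
Proof.
elim: k => [|k IH] /=; first exact: iff_refl.
exact: iff_trans (iff_next IH) (iff_sym (ax_next_neg _)).
Qed.

Lemma iter_next_box (PV : Type) k (a : form PV) :
  wK4H (Iff (iter k Next (Box a)) (Box (iter k Next a))).
Proof.
elim: k => [|k IH] /=; first exact: iff_refl.
exact: iff_trans (iff_next IH) (iff_sym (ax_H _)).
Qed.

Lemma next_nf_equiv (PV : Type) (a : form PV) k :
  wK4H (Iff (iter k Next a) (expand (next_nf a k))).
Proof.
elim: a k => [p|b IHb c IHc|b IHb|b IHb|b IHb] k /=.
- exact: iff_refl.
- exact: iff_trans (iter_next_and _ _ _) (iff_and (IHb k) (IHc k)).
- exact: iff_trans (iter_next_neg _ _) (iff_neg (IHb k)).
- exact: iff_trans (iter_next_box _ _) (iff_box (IHb k)).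
- by rewrite -iterSr; apply: IHb.
Qed.

Section CanonicalModel.
Variables (PV : Type) (p0 : PV).

(* The canonical frame of wK4H. *)
Definition canon := {G : form PV -> Prop | maxcons p0 G}.
Definition canon_rel (G D : canon) : Prop := forall a, sval G (Box a) -> sval D a.
Definition canon_val (kp : nat * PV) (G : canon) : Prop := sval G (expand (Var kp)).

Lemma canon_ext (G D : canon) : (forall a, sval G a -> sval D a) -> G = D.
Proof.
case: G D => [G mG] [D mD] /= GD.
suff eGD : G = D by subst D; congr exist; apply: Prop_irrelevance.
apply: funext => a; apply: propext; split=> [|Da]; first exact: GD.
by apply: NNPP => /(maxcons_neg mG) /GD /(maxcons_neg mD).
Qed.

(* Axiom w4 makes the canonical relation weakly transitive: if G <> E, pick
   t in G but not in E; from Box a in G, w4 gives Box Box (a \/ t) in G, so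
   a \/ t, hence a, lies in E. *)
Lemma canon_weakly_transitive : weakly_transitive canon_rel.
Proof.
move=> [G mG] [D mD] [E mE] /= RGD RDE nGE a Ga /=.
have [t [Gt nEt]] : exists t, G t /\ ~ E t.
  apply: NNPP => h; apply: nGE; apply: canon_ext => /= b Gb; apply: NNPP => nEb.
  by apply: h; exists b.
pose a_or_t := Or a t.
have G_aot : G a_or_t.
  by apply: (@maxcons_closed _ _ _ mG [:: t]); [repeat constructor|apply: ax_taut; ptaut].
have G_baot : G (Box a_or_t).
  apply: (maxcons_mp mG _ Ga); apply: (maxcons_der mG).
  by apply: box_mono; apply: ax_taut; ptaut.
have G_bbaot : G (Box (Box a_or_t)).
  by apply: (maxcons_mp mG (maxcons_der mG (ax_w4 a_or_t))); apply/(maxcons_and mG).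
have E_aot := RDE _ (RGD _ G_bbaot).
have Ent := (maxcons_neg mE t).2 nEt.
apply: (@maxcons_closed _ _ _ mE [:: a_or_t; Neg t]); first by repeat constructor.
by apply: ax_taut; ptaut.
Qed.

Lemma canon_existence (G : canon) a :
  ~ sval G (Box a) -> exists D : canon, canon_rel G D /\ ~ sval D a.
Proof.
case: G => G mG /= nGa.
have cS : consistent p0 (fun b => G (Box b) \/ b = Neg a).
  move=> l hl hn; apply: nGa.
  set l' := filter (fun c => `[< G (Box c) >]) l.
  have h1 : wK4H (Imp (conj p0 l') a).
    apply: (taut_mp _ hn) => v; rewrite !peval_imp /= => h1 h2; apply: NNPP => h3.
    exact/h1/(conj_filter_split hl h2).
  apply: (@maxcons_closed _ _ _ mG (map Box l')).
    have : List.Forall (fun c => G (Box c)) l' by apply: Forall_filter_asbool.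
    by elim=> //= c m Gc _ IH; constructor.
  exact: imp_trans (box_conj p0 l') (box_mono h1).
have [D [mD SD]] := lindenbaum cS.
exists (exist _ D mD); split=> /= [b Gb|]; first by apply: SD; left.
by apply/(maxcons_neg mD); apply: SD; right.
Qed.

Lemma canon_truth (a : form (nat * PV)) : next_free a ->
  forall G : canon, ksat canon_rel id canon_val a G <-> sval G (expand a).
Proof.
elim: a => [kp|a IHa b IHb|a IHa|a IHa|a IHa] //= Hn G.
- by case: Hn => h1 h2; rewrite IHa // IHb // (maxcons_and (svalP G)).
- by rewrite IHa // (maxcons_neg (svalP G)).
split=> [H|H D RGD]; last by rewrite IHa //; apply: RGD.
apply: NNPP => nG; have [D [RGD nD]] := canon_existence nG.
by apply: nD; rewrite -IHa //; apply: H.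
Qed.

Lemma canon_refutes (psi : form (nat * PV)) :
  next_free psi -> ~ wK4H (expand psi) ->
  exists G : canon, ~ ksat canon_rel id canon_val psi G.
Proof.
move=> psi_free npsi.
have cS : consistent p0 (fun b => b = Neg (expand psi)).
  move=> l hl hn; apply: npsi; apply: (taut_mp _ hn) => v; rewrite !peval_imp /= => h.
  apply: NNPP => h'; apply/h/peval_conj; by apply: List.Forall_impl hl => b ->.
have [G [mG SG]] := lindenbaum cS.
exists (exist _ G mG); rewrite canon_truth //=.
by apply/(maxcons_neg mG); apply: SG.
Qed.
End CanonicalModel.

Fixpoint subforms {A : Type} (a : form A) : seq (form A) :=
  a :: match a with
       | Var _ => [::]
       | And b c => List.app (subforms b) (subforms c)
       | Neg b | Box b | Next b => subforms b
       end.

Lemma subforms_self (A : Type) (a : form A) : List.In a (subforms a).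
Proof. by case: a => *; left. Qed.

Lemma subforms_trans (A : Type) (a b c : form A) :
  List.In b (subforms a) -> List.In c (subforms b) -> List.In c (subforms a).
Proof.
elim: a => [p|a1 IH1 a2 IH2|a1 IH1|a1 IH1|a1 IH1] /= [<-//|Hb] Hc; right.
- by case: Hb.
- apply/List.in_app_iff; case/List.in_app_iff: Hb => Hb.
  + by left; apply: IH1 Hb Hc.
  + by right; apply: IH2 Hb Hc.
- exact: IH1 Hb Hc.
- exact: IH1 Hb Hc.
- exact: IH1 Hb Hc.
Qed.

Lemma In_nth_index (T : Type) (x0 x : T) (s : seq T) :
  List.In x s -> exists2 i, i < size s & nth x0 s i = x.
Proof. by elim: s => //= y s IH [<-|/IH [i lti <-]]; [exists 0|exists i.+1]. Qed.

Section Filtration.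
Variables (A W : Type) (R : W -> W -> Prop) (val : A -> W -> Prop).
Hypothesis R_wtrans : weakly_transitive R.
Variable psi : form A.

Local Notation sat a x := (ksat R id val a x).

(* Subformulas of psi, indexed by an ordinal so that types are finite. *)
Definition nsub : nat := size (subforms psi).
Definition sf (i : 'I_nsub) : form A := nth psi (subforms psi) i.
Definition in_sub (a : form A) : Prop := List.In a (subforms psi).

Lemma in_sub_sf a : in_sub a -> exists i : 'I_nsub, sf i = a.
Proof. by case/(In_nth_index psi) => i lti <-; exists (Ordinal lti). Qed.

Lemma in_sub_closed a b : in_sub a -> List.In b (subforms a) -> in_sub b.
Proof. exact: subforms_trans. Qed.

Definition ftype := {ffun 'I_nsub -> bool}.
Definition tp (x : W) : ftype := [ffun i => `[< sat (sf i) x >]].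
Lemma tpE x i : tp x i <-> sat (sf i) x.
Proof. by rewrite ffunE; split=> /asboolP. Qed.

Definition Rr (x y : W) : Prop := x = y \/ R x y.
Definition same_cluster (x y : W) : Prop := Rr x y /\ Rr y x.
Definition strictly_above (x z : W) : Prop := Rr x z /\ ~ Rr z x.

Lemma Rr_trans x y z : Rr x y -> Rr y z -> Rr x z.
Proof.
move=> [<-//|Rxy] [<-|Ryz]; first by right.
by have [->|nxz] := classic (x = z); [left|right; apply: R_wtrans Rxy Ryz nxz].
Qed.

(* A point of the filtration records the type of a world, the set of types in
   its cluster, and the subformulas true at every point strictly above it. *)
Definition cluster_types (x : W) : {set ftype} :=
  [set T | `[< exists y, same_cluster x y /\ tp y = T >]].
Definition above_type (x : W) : ftype :=
  [ffun i => `[< forall z, strictly_above x z -> sat (sf i) z >]].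
Definition fpoint := (ftype * ({set ftype} * ftype))%type.
Definition fpt (x : W) : fpoint := (tp x, (cluster_types x, above_type x)).

(* Cluster data can only grow along R: what holds strictly above is
   inherited, and holds in every type of the later cluster. *)
Definition cluster_le (s t : {set ftype} * ftype) : Prop :=
  s = t \/ ((forall i, s.2 i -> t.2 i) /\
           (forall T, T \in t.1 -> forall i, s.2 i -> T i)).
Definition box_reflexive (T : ftype) : Prop :=
  forall i j, sf i = Box (sf j) -> T i -> T j.

(* The filtrated relation; a point is related to itself only if its type
   is closed under removing a Box. *)
Definition frel (d e : fpoint) : Prop :=
  (exists z, e = fpt z) /\ cluster_le d.2 e.2 /\ (d <> e \/ box_reflexive d.1).
Definition fval (p : A) (d : fpoint) : Prop := exists i, sf i = Var p /\ d.1 i.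

Lemma frel_weakly_transitive : weakly_transitive frel.
Proof.
move=> d e g [_ [le1 _]] [rg [le2 _]] ndg; do 2!split=> //; last by left.
case: le1 le2 => [->|[s1 s2]] [<-|[t1 t2]]; [by left|by right|by right|].
by right; split=> [i /s1/t1 //|T HT i /s1 /(t2 _ HT)].
Qed.

Lemma fpt_cluster x y : same_cluster x y -> (fpt x).2 = (fpt y).2.
Proof.
move=> [xy yx]; congr pair.
  apply/setP => T; rewrite !inE; apply: asbool_equiv_eq.
  by split=> -[z [[h1 h2] e]]; exists z; do !split=> //; apply: Rr_trans; eassumption.
apply/ffunP => i; rewrite !ffunE; apply: asbool_equiv_eq.
split=> H z [h1 h2]; apply: H; split; [exact: Rr_trans xy h1| |exact: Rr_trans yx h1|].
- by move=> h; apply/h2/(Rr_trans h xy).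
- by move=> h; apply/h2/(Rr_trans h yx).
Qed.

Lemma cluster_le_of_R x y : R x y -> cluster_le (fpt x).2 (fpt y).2.
Proof.
move=> Rxy; have [yx|nyx] := classic (Rr y x).
  by left; apply: fpt_cluster; split=> //; right.
right; split=> /= [k|T]; rewrite ?ffunE.
  move=> /asboolP Hk; apply/asboolP => z [yz nzy]; apply: Hk.
  split; [exact: Rr_trans (or_intror Rxy) yz|by move/Rr_trans/(_ (or_intror Rxy))].
rewrite inE => /asboolP [z [[yz zy] <-]] k; rewrite ffunE => /asboolP Hk; apply/tpE.
by apply: Hk; split; [exact: Rr_trans (or_intror Rxy) yz|move=> zx; apply/nyx/(Rr_trans yz zx)].
Qed.

Lemma frel_of_R x y : R x y -> frel (fpt x) (fpt y).
Proof.
move=> Rxy; split; first by exists y.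
split; first exact: cluster_le_of_R.
have [exy|] := classic (fpt x = fpt y); [right|by left].
move=> i j eij /tpE; rewrite eij /= => Hi.
have -> : tp x = tp y := f_equal fst exy.
by apply/tpE; apply: Hi.
Qed.

Lemma frel_box x z i j : sf i = Box (sf j) -> frel (fpt x) (fpt z) ->
  sat (sf i) x -> sat (sf j) z.
Proof.
move=> eij [_ [lexz xz_refl]] Hi; move: (Hi); rewrite eij /= => Hx.
have tz : tp z \in cluster_types z.
  by rewrite inE; apply/asboolP; exists z; do !split; left.
case: lexz => [e2|[_ s2]]; last first.
  apply/tpE/(s2 _ tz j); rewrite ffunE; apply/asboolP => w [[exw|Rxw] nwx]; last exact: Hx.
  by case: nwx; rewrite exw; left.
have eTS : cluster_types x = cluster_types z := f_equal fst e2.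
move: tz; rewrite -eTS inE => /asboolP [y [[[eyx|Rxy] _] ety]]; last first.
  by apply/tpE; rewrite -ety; apply/tpE/Hx.
subst y; case: xz_refl => [nxz|x_refl].
  by case: nxz; rewrite /fpt ety; congr pair; apply: e2.
by apply/tpE; rewrite -ety; apply: x_refl eij _; apply/tpE.
Qed.

Lemma filtration_truth a : in_sub a -> forall x, ksat frel id fval a (fpt x) <-> sat a x.
Proof.
elim: a => [p|a IHa b IHb|a IHa|a IHa|a IHa] Ha x /=.
- have [i ei] := in_sub_sf Ha.
  by split=> [[k [ek /tpE]]|Hx]; [rewrite ek|exists i; split=> //; apply/tpE; rewrite ei].
- have Ha' : in_sub a.
    by apply: (in_sub_closed Ha); right; apply/List.in_app_iff; left; apply: subforms_self.
  have Hb' : in_sub b.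
    by apply: (in_sub_closed Ha); right; apply/List.in_app_iff; right; apply: subforms_self.
  by rewrite IHa // IHb.
- by rewrite IHa //; apply: (in_sub_closed Ha); right; apply: subforms_self.
- have Ha' : in_sub a by apply: (in_sub_closed Ha); right; apply: subforms_self.
  have [i ei] := in_sub_sf Ha; have [j ej] := in_sub_sf Ha'.
  have eij : sf i = Box (sf j) by rewrite ei ej.
  split=> [H y Rxy|H e Rxe]; first by rewrite -IHa //; apply/H/frel_of_R.
  case: (Rxe) => [[z ez] _]; subst e; rewrite IHa // -ej.
  by apply: (frel_box eij Rxe); rewrite ei.
- by rewrite IHa //; apply: (in_sub_closed Ha); right; apply: subforms_self.
Qed.

Lemma filtration x0 : ~ sat psi x0 ->
  exists (F : finType) (RF : F -> F -> Prop) (valF : A -> F -> Prop) (d0 : F),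
    weakly_transitive RF /\ ~ ksat RF id valF psi d0.
Proof.
move=> npsi; exists (fpoint : finType), frel, fval, (fpt x0).
split; first exact: frel_weakly_transitive.
by rewrite filtration_truth //; apply: subforms_self.
Qed.
End Filtration.

Lemma ksat_iter_next (PV W : Type) (R : W -> W -> Prop) (f : W -> W)
    (val : PV -> W -> Prop) k a x :
  ksat R f val (iter k Next a) x <-> ksat R f val a (iter k f x).
Proof. by elim: k x => [|k IH] x //=; rewrite IH -iterSr. Qed.

Section Layers.
Variables (PV : Type) (F : finType) (R : F -> F -> Prop) (V : nat * PV -> F -> Prop).
Hypothesis R_wtrans : weakly_transitive R.
Variable B : nat.

(* B + 1 copies of F arranged in a cycle, the dynamics moving one layer up;
   the variable p at layer k is interpreted as the atom (k, p) of F.  For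
   atoms with k <= B, Next^k p at layer 0 is thus evaluated at layer k. *)
Definition layers := (F * 'I_B.+1)%type.
Definition layer_rel (x y : layers) : Prop := R x.1 y.1 /\ x.2 = y.2.
Definition layer_shift (x : layers) : layers := (x.1, ordS x.2).
Definition layer_val (p : PV) (x : layers) : Prop := V (nat_of_ord x.2, p) x.1.

Lemma iter_layer_shift k x : iter k layer_shift x = (x.1, iter k (@ordS _) x.2).
Proof. by elim: k => [|k IH] /=; [case: x|rewrite IH]. Qed.

Lemma iter_ordS k : nat_of_ord (iter k (@ordS B.+1) ord0) = k %% B.+1.
Proof. by elim: k => [|k IH] /=; rewrite ?mod0n // IH -addn1 modnDml addn1. Qed.

Lemma layer_frame (w0 : F) : inv_dyn_wK4_frame layer_rel layer_shift.
Proof.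
split; first exact: inhabits (w0, ord0).
split.
  move=> [w i] [v j] [u k] [Rwv /= eij] [Rvu /= ejk] nwu; split=> /=; last by rewrite eij.
  by apply: R_wtrans Rwv Rvu _ => /= ewu; apply: nwu; rewrite ewu eij ejk.
split.
  by exists (fun x => (x.1, ord_pred x.2)) => -[w i]; rewrite /layer_shift /= ?ordSK ?ord_predK.
by move=> [w i] [v j]; rewrite /layer_rel /=; split=> [[h ->]|[h /ordS_inj ->]].
Qed.

Lemma layer_truth (a : form (nat * PV)) : next_free a -> var_bound B a ->
  forall w, ksat layer_rel layer_shift layer_val (expand a) (w, ord0) <-> ksat R id V a w.
Proof.
elim: a => [[k p]|a IHa b IHb|a IHa|a IHa|a IHa] //= Ha Hb w.
- by rewrite ksat_iter_next iter_layer_shift /layer_val /= iter_ordS modn_small.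
- by case: Ha Hb => ?? [??]; rewrite IHa // IHb.
- by rewrite IHa.
split=> [H v Rwv|H [v j] [Rwv /= <-]]; last by rewrite IHa //; apply: H.
by rewrite -IHa //; apply: H.
Qed.
End Layers.

Lemma completeness (PV : Type) (p0 : PV) (phi : form PV) :
  (forall (W : finType) (R : W -> W -> Prop) (f : W -> W),
      inv_dyn_wK4_frame R f -> frame_valid R f phi) -> wK4H phi.
Proof.
move=> Hphi; apply: NNPP => nphi.
pose psi := next_nf phi 0; pose B := next_depth phi.
have phi_psi : wK4H (Iff phi (expand psi)) := next_nf_equiv phi 0.
have [G nG] : exists G, ~ ksat (@canon_rel PV p0) id (@canon_val PV p0) psi G.
  apply: canon_refutes; first exact: next_nf_free.
  by move=> h; apply: nphi; apply: r_mp h; apply/iff_imp/iff_sym.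
have [F [RF [valF [d0 [RF_wt nF]]]]] := filtration (@canon_weakly_transitive PV p0) nG.
have layered := layer_frame RF_wt B d0; pose val := @layer_val PV F valF B.
have := frame_valid_of_wK4H (iff_imp phi_psi) layered val (d0, ord0).
rewrite ksat_Imp layer_truth; [|exact: next_nf_free|exact: next_nf_bound].
by move/(_ (Hphi _ _ _ layered val (d0, ord0))).
Qed.

Theorem mainTheorem8 (PV : Type) (hPV : inhabited PV) (phi : form PV) :
  (wK4H phi <->
   (forall (W : finType) (R : W -> W -> Prop) (f : W -> W),
      inv_dyn_wK4_frame R f -> frame_valid R f phi)) /\
  ((forall (W : finType) (R : W -> W -> Prop) (f : W -> W),
      inv_dyn_wK4_frame R f -> frame_valid R f phi) <->
   (forall (X : finType) (opens : (X -> Prop) -> Prop) (f : X -> X),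
      is_topology opens -> homeomorphism opens f -> dts_valid opens f phi)).
Proof.
case: hPV => p0; split.
  split; last exact: (completeness p0).
  by move=> Hphi W R f; apply: frame_valid_of_wK4H.
by split; [apply: dts_valid_of_frame_valid|apply: frame_valid_of_dts_valid].
Qed.
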